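(* Let $K\ge1$, $\Delta_0,B>0$, and for $k=1,\dots,K$ let $m_k\ge0$, $v_k\ge0$. Let $\mathcal{G}\subset\mathbb{R}^K$ be the set of $\mathbf{r}$ for which there exist $\mathbf{p},\mathbf{y}\in\mathbb{R}^K$ and a $2K\times2K$ real matrix $\mathbf{H}=\begin{bmatrix}\mathbf{H}^{xx}&\mathbf{H}^{x\phi}\\(\mathbf{H}^{x\phi})^{\rm T}&\mathbf{H}^{\phi\phi}\end{bmatrix}$ (with $K\times K$ blocks) satisfying, for every $k$: $r_k\ge0$; $r_k\le\Delta_0B\,p_k\log_2(1+y_k/p_k)$; $0\le p_k\le1$; $\sum_kp_k\le1$; $H^{x\phi}_{k,k}=y_k-p_km_k$; $H^{\phi\phi}_{k,k}=v_k$ and $H^{\phi\phi}_{i,j}=0$ for $i\neq j$; $H^{xx}_{k,k}\le p_k-p_k^2$; $\sum_{i,j}H^{xx}_{i,j}\le\sum_ip_i-(\sum_ip_i)^2$; $\mathbf{H}\succeq0$. Then $\mathcal{G}$ is bounded.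
   Context: $\mathbf{H}\succeq0$ means $\mathbf{H}$ is positive semidefinite. In the rate constraint the function $p\log_2(1+y/p)$ is understood as its perspective (value $0$ at $p=0$). *)

From HB Require Import structures.
From mathcomp Require Import all_boot all_order all_algebra.
From mathcomp Require Import all_classical all_reals all_analysis.
Set Implicit Arguments. Unset Strict Implicit. Unset Printing Implicit Defensive.
Import Order.TTheory GRing.Theory Num.Theory.
Local Open Scope ring_scope.

Definition log2 {R : realType} (x : R) : R := ln x / ln 2.

Definition persp_log2 {R : realType} (p y : R) : R :=
  if p == 0 then 0 else p * log2 (1 + y / p).

Definition psdmx {R : realType} {n : nat} (H : 'M[R]_n) : Prop :=
  H^T = H /\ forall v : 'cV[R]_n, 0 <= (v^T *m H *m v) 0 0.

Definition regionG {R : realType} (K : nat) (D0 B : R) (m v : 'I_K -> R)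
    (r : 'I_K -> R) : Prop :=
  exists (p y : 'I_K -> R) (Hxx Hxphi Hphiphi : 'M[R]_K),
    (forall k, 0 <= r k) /\
    (forall k, r k <= D0 * B * persp_log2 (p k) (y k)) /\
    (forall k, 0 < p k -> 0 < 1 + y k / p k) /\
    (forall k, 0 <= p k <= 1) /\
    (\sum_(k < K) p k <= 1) /\
    (forall k, Hxphi k k = y k - p k * m k) /\
    (forall k, Hphiphi k k = v k) /\
    (forall i j, i != j -> Hphiphi i j = 0) /\
    (forall k, Hxx k k <= p k - p k ^+ 2) /\
    (\sum_(i < K) \sum_(j < K) Hxx i j <=
       \sum_(i < K) p i - (\sum_(i < K) p i) ^+ 2) /\
    psdmx (block_mx Hxx Hxphi Hxphi^T Hphiphi).

From HB Require Import structures.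
From mathcomp Require Import all_boot all_order all_algebra.
From mathcomp Require Import all_classical all_reals all_analysis.
From mathcomp Require Import lra.
Set Implicit Arguments. Unset Strict Implicit. Unset Printing Implicit Defensive.
Import Order.TTheory GRing.Theory Num.Theory.
Local Open Scope ring_scope.

(* Only two facts matter: ln (1 + t) <= t turns the rate bound into r_k <= c y_k,
   and testing H >= 0 against e_i - e_j, where i, j index the x and phi copies of k,
   gives 2 (y_k - p_k m_k) <= H^xx_kk + v_k <= 1 + v_k.  So r_k <= c (m_k + 1 + v_k). *)

Section PsdEntries.
Variables (R : realType) (n : nat).

Definition basis_cV (i : 'I_n) : 'cV[R]_n := delta_mx i 0.

Lemma basis_cV_quad (H : 'M[R]_n) i j :
  (basis_cV i)^T *m H *m basis_cV j = const_mx (H i j).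
Proof.
by apply/matrixP => a b; rewrite !ord1 /basis_cV trmx_delta -rowE -colE !mxE.
Qed.

Lemma psdmx_offdiag_le (H : 'M[R]_n) i j :
  psdmx H -> 2 * H i j <= H i i + H j j.
Proof.
move=> [HT Hq]; have := Hq (basis_cV i - basis_cV j).
rewrite [(_ - _)^T]linearB /= !mulmxBl !mulmxBr !basis_cV_quad !mxE.
have -> : H j i = H i j by rewrite -{1}HT mxE.
lra.
Qed.

End PsdEntries.

Lemma ln2_gt0 (R : realType) : 0 < ln (2 : R).
Proof. by rewrite ln_gt0 // ltr1n. Qed.

Lemma persp_log2_le (R : realType) (p y : R) :
  0 <= p -> (0 < p -> 0 < 1 + y / p) -> persp_log2 p y <= Num.max 0 y / ln 2.
Proof.
move=> p_ge0 dom; rewrite /persp_log2.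
have max_ge0 : 0 <= Num.max 0 y / ln 2.
  by rewrite divr_ge0 ?le_max ?lexx // ltW // ln2_gt0.
have [//|p_neq0] := eqVneq p 0.
have p_gt0 : 0 < p by rewrite lt_neqAle eq_sym p_neq0.
have ln_le : ln (1 + y / p) <= y / p by apply: le_ln1Dx; have := dom p_gt0; lra.
rewrite /log2 mulrA ler_pM2r ?invr_gt0 ?ln2_gt0 //.
apply: le_trans (_ : p * (y / p) <= _); first by rewrite ler_pM2l.
by rewrite mulrCA divff // mulr1 le_max lexx orbT.
Qed.

Lemma regionG_le (R : realType) (K : nat) (D0 B : R) (m v r : 'I_K -> R) :
  0 < D0 -> 0 < B -> (forall k, 0 <= m k) -> (forall k, 0 <= v k) ->
  regionG D0 B m v r -> forall k, r k <= D0 * B / ln 2 * (m k + 1 + v k).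
Proof.
move=> D0_gt0 B_gt0 hm hv.
move=> [p [y [Hxx [Hxphi [Hphiphi [_ [hr [hdom [hp [_ [hxphi [hphiphi
  [_ [hxx [_ hpsd]]]]]]]]]]]]]]] k.
have [p_ge0 p_le1] := andP (hp k).
have y_le : y k <= m k + 1 + v k.
  have := psdmx_offdiag_le (lshift K k) (rshift K k) hpsd.
  rewrite block_mxEul block_mxEur block_mxEdr hxphi hphiphi.
  by have := hxx k; have := hm k; have := hv k; nra.
apply: le_trans (hr k) _; rewrite -[D0 * B / _ * _]mulrA ler_pM2l ?mulr_gt0 //.
apply: le_trans (persp_log2_le p_ge0 (hdom k)) _.
rewrite mulrC ler_pM2l ?invr_gt0 ?ln2_gt0 // ge_max y_le andbT.
by have := hm k; have := hv k; lra.
Qed.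

Theorem mainTheorem7 (R : realType) (K : nat) (hK : (1 <= K)%N)
    (D0 B : R) (hD0 : 0 < D0) (hB : 0 < B) (m v : 'I_K -> R)
    (hm : forall k, 0 <= m k) (hv : forall k, 0 <= v k) :
  exists M : R, forall r : 'I_K -> R,
    regionG D0 B m v r -> forall k, `|r k| <= M.
Proof.
exists (D0 * B / ln 2 * \sum_(k < K) (m k + 1 + v k)) => r hG k.
have [_ [_ [_ [_ [_ [r_ge0 _]]]]]] := hG.
rewrite ger0_norm ?r_ge0 //; apply: le_trans (regionG_le hD0 hB hm hv hG k) _.
rewrite ler_pM2l ?divr_gt0 ?mulr_gt0 ?ln2_gt0 // (bigD1 k) //= lerDl.
by apply: sumr_ge0 => i _; have := hm i; have := hv i; lra.
Qed.
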